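(* Let $\mathsf{K}$ be a variety, $\mathbf{B}\in\mathsf{K}$, and $\mathbf{A}\leq\mathbf{B}$ fully epic in $\mathsf{K}$. For all congruences $\theta_1,\theta_2$ of $\mathbf{B}$, \[(\theta_1+^{\mathbf{B}}\theta_2){\upharpoonright}_A=\theta_1{\upharpoonright}_A+^{\mathbf{A}}\theta_2{\upharpoonright}_A.\]
   Context: For an algebra $\mathbf{C}$, $+^{\mathbf{C}}$ denotes the join in the congruence lattice of $\mathbf{C}$; $\theta{\upharpoonright}_A=\theta\cap(A\times A)$. $\mathbf{A}\leq\mathbf{B}$ is epic in $\mathsf{K}$ if for all $\mathbf{C}\in\mathsf{K}$ and homomorphisms $g,h\colon\mathbf{B}\to\mathbf{C}$, $g{\upharpoonright}_A=h{\upharpoonright}_A$ implies $g=h$; it is full in $\mathsf{K}$ if it is proper, almost total ($B=\mathrm{Sg}^{\mathbf{B}}(A\cup\{b\})$ for some $b$), and every congruence $\theta\neq\mathrm{id}_B$ of $\mathbf{B}$ relates each $b\in B$ to some $a\in A$; fully epic means full and epic. *)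

From mathcomp Require Import all_boot.
Set Implicit Arguments. Unset Strict Implicit. Unset Printing Implicit Defensive.

Section UA.
Variable Op : Type.
Variable ar : Op -> nat.

Record algebra := Algebra {
  carrier :> Type;
  op : forall o : Op, ('I_(ar o) -> carrier) -> carrier }.
Arguments op : clear implicits.

Inductive term : Type :=
| Var : nat -> term
| App : forall o : Op, ('I_(ar o) -> term) -> term.

Fixpoint eval (C : algebra) (v : nat -> C) (t : term) : C :=
  match t with
  | Var n => v n
  | App o args => op C o (fun i => @eval C v (args i))
  end.

(* The variety defined by a set E of identities: K = Mod(E). *)
Definition in_variety (E : term -> term -> Prop) (C : algebra) : Prop :=
  forall s t, E s t -> forall v : nat -> C, eval v s = eval v t.

Definition hom (B C : algebra) (g : B -> C) : Prop :=
  forall o (a : 'I_(ar o) -> B), g (op B o a) = op C o (fun i => g (a i)).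

Definition subuniverse (B : algebra) (S : B -> Prop) : Prop :=
  forall o (a : 'I_(ar o) -> B), (forall i, S (a i)) -> S (op B o a).

Definition subalg (B : algebra) (S : B -> Prop) (HS : subuniverse S) : algebra :=
  @Algebra {x : B | S x}
    (fun o a => exist S (op B o (fun i => proj1_sig (a i)))
                      (HS o _ (fun i => proj2_sig (a i)))).

Definition Sg (B : algebra) (X : B -> Prop) (x : B) : Prop :=
  forall S, subuniverse S -> (forall y, X y -> S y) -> S x.

Definition congruence (C : algebra) (th : C -> C -> Prop) : Prop :=
  [/\ (forall x, th x x),
      (forall x y, th x y -> th y x),
      (forall x y z, th x y -> th y z -> th x z) &
      (forall o (a b : 'I_(ar o) -> C), (forall i, th (a i) (b i)) ->
          th (op C o a) (op C o b))].

Definition cjoin (C : algebra) (th1 th2 : C -> C -> Prop) (x y : C) : Prop :=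
  forall phi, congruence phi ->
    (forall a b, th1 a b -> phi a b) -> (forall a b, th2 a b -> phi a b) ->
    phi x y.

Definition restr (B : algebra) (S : B -> Prop) (th : B -> B -> Prop)
  (x y : {x : B | S x}) : Prop := th (proj1_sig x) (proj1_sig y).

Definition epic (E : term -> term -> Prop) (B : algebra) (S : B -> Prop) : Prop :=
  forall (C : algebra), in_variety E C ->
  forall g h : B -> C, hom g -> hom h ->
    (forall a, S a -> g a = h a) -> forall b, g b = h b.

(* A <= B is full: proper, almost total, and every non-identity congruence
   relates each element of B to some element of A. *)
Definition full (B : algebra) (S : B -> Prop) : Prop :=
  [/\ (exists b : B, ~ S b),
      (exists b : B, forall x, Sg (fun y => S y \/ y = b) x) &
      (forall th, congruence th -> ~ (forall x y, th x y <-> x = y) ->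
         forall b : B, exists a, S a /\ th b a)].

Definition fully_epic E B S := full S /\ @epic E B S.

End UA.

(* Restricting the join is the easy inclusion.  For the other one, when both
   congruences are non-trivial, fullness lets every b be moved into A along
   th1, so psi := (th1|A + th2|A) extends to the congruence th1 ; psi ; th1 of
   B, whose restriction to A is psi again.  It contains th1, and it contains
   th2 because of epicness: choosing r b in A with th2 b (r b), the maps
   b |-> [b] and b |-> [r b] into B / (th1 ; psi ; th1) are homomorphisms
   agreeing on A, hence equal.  If one of the congruences is the identity the
   join is just the other one. *)
From Stdlib Require Import Classical ClassicalEpsilon FunctionalExtensionality.
From Stdlib Require Import PropExtensionality ProofIrrelevance.
From mathcomp Require Import all_boot.

Set Implicit Arguments.
Unset Strict Implicit.
Unset Printing Implicit Defensive.

Section Join.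
Variables (Op : Type) (ar : Op -> nat) (C : algebra ar).
Implicit Types th : C -> C -> Prop.

Lemma cjoin_congruence th1 th2 : congruence (cjoin th1 th2).
Proof.
split.
- by move=> x phi [refl _ _ _] _ _; apply: refl.
- move=> x y Hxy phi Hphi h1 h2; case: (Hphi) => _ sym _ _.
  exact: sym (Hxy phi Hphi h1 h2).
- move=> x y z Hxy Hyz phi Hphi h1 h2; case: (Hphi) => _ _ trans _.
  exact: trans (Hxy phi Hphi h1 h2) (Hyz phi Hphi h1 h2).
- move=> o a b Hab phi Hphi h1 h2; case: (Hphi) => _ _ _ compat.
  by apply: compat => i; apply: Hab.
Qed.

Lemma cjoinl th1 th2 x y : th1 x y -> cjoin th1 th2 x y.
Proof. by move=> H phi _ h1 _; apply: h1. Qed.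

Lemma cjoinr th1 th2 x y : th2 x y -> cjoin th1 th2 x y.
Proof. by move=> H phi _ _ h2; apply: h2. Qed.

Lemma cjoin_idl_sub th1 th2 x y : (forall u v, th1 u v -> u = v) ->
  congruence th2 -> cjoin th1 th2 x y -> th2 x y.
Proof.
move=> id1 H2 Hxy; apply: Hxy => // u v /id1 ->.
by case: H2 => refl _ _ _; apply: refl.
Qed.

Lemma cjoin_idr_sub th1 th2 x y : (forall u v, th2 u v -> u = v) ->
  congruence th1 -> cjoin th1 th2 x y -> th1 x y.
Proof.
move=> id2 H1 Hxy; apply: Hxy => // u v /id2 ->.
by case: H1 => refl _ _ _; apply: refl.
Qed.

End Join.

Section Restriction.
Variables (Op : Type) (ar : Op -> nat) (B : algebra ar).
Variables (A : B -> Prop) (HA : subuniverse A).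

Lemma restr_congruence th :
  congruence th -> congruence (C := subalg HA) (restr th).
Proof.
case=> refl sym trans compat; split.
- by move=> x; apply: refl.
- by move=> x y; apply: sym.
- by move=> x y z; apply: trans.
- by move=> o a b Hab; apply: compat.
Qed.

Lemma cjoin_restr_sub_restr_cjoin th1 th2 x y :
  cjoin (C := subalg HA) (restr th1) (restr th2) x y ->
  restr (cjoin th1 th2) x y.
Proof.
apply; first exact/restr_congruence/cjoin_congruence.
- by move=> a b; apply: (cjoinl (C := B)).
- by move=> a b; apply: (cjoinr (C := B)).
Qed.

End Restriction.

Section Quotient.
Variables (Op : Type) (ar : Op -> nat) (B : algebra ar).
Variables (gam : B -> B -> Prop) (Hgam : congruence gam).

(* Classes are represented by their membership predicates, so that equality of
   classes is Leibniz equality (via extensionality and proof irrelevance). *)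
Definition qclass_type := {P : B -> Prop | exists b, P = gam b}.

Definition qclass (b : B) : qclass_type := exist _ (gam b) (ex_intro _ b erefl).

Definition qrepr (q : qclass_type) : B :=
  proj1_sig (constructive_indefinite_description _ (proj2_sig q)).

Lemma qclass_inj (q1 q2 : qclass_type) : sval q1 = sval q2 -> q1 = q2.
Proof.
case: q1 q2 => [P1 p1] [P2 p2] /= E; move: p1 p2; rewrite E => p1 p2.
by rewrite (proof_irrelevance _ p1 p2).
Qed.

Lemma qreprK q : qclass (qrepr q) = q.
Proof.
apply: qclass_inj; rewrite /qrepr /=.
by case: constructive_indefinite_description.
Qed.

Lemma qclass_eq x y : qclass x = qclass y <-> gam x y.
Proof.
case: Hgam => refl sym trans _; split.
- by move=> /(congr1 sval) /= ->; apply: refl.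
- move=> Hxy; apply: qclass_inj; apply: functional_extensionality => z.
  apply: propositional_extensionality; split.
  + exact: trans (sym _ _ Hxy).
  + exact: trans Hxy.
Qed.

Lemma congr_qreprK b : gam b (qrepr (qclass b)).
Proof. by apply/qclass_eq; rewrite qreprK. Qed.

Definition quot : algebra ar :=
  @Algebra Op ar qclass_type
    (fun o q => qclass (@op _ _ B o (fun i => qrepr (q i)))).

Lemma qclass_comp_hom (f : B -> B) :
  (forall o b, gam (f (@op _ _ B o b)) (@op _ _ B o (fun i => f (b i)))) ->
  hom (C := quot) (fun b => qclass (f b)).
Proof.
move=> Hf o b /=; apply/qclass_eq; case: Hgam => _ _ trans compat.
apply: trans (Hf o b) _; apply: compat => i; exact: congr_qreprK.
Qed.

Lemma eval_quot (v : nat -> quot) t :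
  eval v t = qclass (eval (fun n => qrepr (v n)) t).
Proof.
elim: t => [n|o args IH] /=; first by rewrite qreprK.
apply/qclass_eq; case: Hgam => _ sym _ compat; apply: compat => i.
by rewrite IH; apply/sym/congr_qreprK.
Qed.

Lemma quot_in_variety E : in_variety E B -> in_variety E quot.
Proof. by move=> HB s t Est v; rewrite !eval_quot (HB s t Est). Qed.

End Quotient.

Section Epic.
Variables (Op : Type) (ar : Op -> nat) (E : term ar -> term ar -> Prop).
Variables (B : algebra ar) (HB : in_variety E B).
Variables (A : B -> Prop) (Hep : epic E A).

Lemma epic_congr_retract (gam : B -> B -> Prop) (r : B -> B) :
  congruence gam -> (forall a, A a -> gam a (r a)) ->
  (forall o b, gam (r (@op _ _ B o b)) (@op _ _ B o (fun i => r (b i)))) ->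
  forall b, gam b (r b).
Proof.
move=> Hgam rA rhom b; apply/(qclass_eq Hgam).
have id_hom : hom (C := quot gam) (qclass gam).
  apply: (qclass_comp_hom Hgam (f := id)) => o b0 /=.
  by case: Hgam => refl _ _ _; apply: refl.
apply: (Hep (quot_in_variety Hgam HB) id_hom (qclass_comp_hom Hgam rhom)).
by move=> a Ha; apply/(qclass_eq Hgam)/rA.
Qed.

End Epic.

Section Lift.
Variables (Op : Type) (ar : Op -> nat) (B : algebra ar).
Variables (A : B -> Prop) (HA : subuniverse A).
Variables (th : B -> B -> Prop) (Hth : congruence th).
Hypothesis th_into_A : forall b, exists a, A a /\ th b a.
Variables (psi : {x : B | A x} -> {x : B | A x} -> Prop).
Hypothesis Hpsi : congruence (C := subalg HA) psi.
Hypothesis restr_th_sub : forall a a', restr th a a' -> psi a a'.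

Definition lift_cong (b b' : B) :=
  exists a a' : {x : B | A x}, [/\ th b (sval a), th b' (sval a') & psi a a'].

Lemma lift_cong_restr a a' : lift_cong (sval a) (sval a') <-> psi a a'.
Proof.
case: Hth Hpsi => refl _ _ _ [_ psym ptrans _]; split.
- case=> a1 [a2 [h1 h2 h12]]; apply: (ptrans _ _ _ (restr_th_sub h1)).
  exact: ptrans h12 (psym _ _ (restr_th_sub h2)).
- by move=> Haa'; exists a, a'; split => //; apply: refl.
Qed.

Lemma lift_cong_ge b b' : th b b' -> lift_cong b b'.
Proof.
case: Hth Hpsi => _ _ trans _ [prefl _ _ _] Hbb'.
have [a [Ha Hb'a]] := th_into_A b'.
by exists (exist _ a Ha), (exist _ a Ha); split; [exact: trans Hb'a| |].
Qed.

Lemma lift_cong_congruence : congruence lift_cong.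
Proof.
case: Hth Hpsi => refl sym trans compat [_ psym ptrans pcompat]; split.
- by move=> b; apply: lift_cong_ge; apply: refl.
- by move=> b b' [a [a' [h1 h2 h12]]]; exists a', a; split => //; apply: psym.
- move=> b b' b'' [a1 [a2 [h1 h2 h12]]] [a3 [a4 [h3 h4 h34]]].
  exists a1, a4; split => //; apply: (ptrans _ _ _ h12 (ptrans _ _ _ _ h34)).
  exact/restr_th_sub/(trans _ _ _ (sym _ _ h2) h3).
- move=> o b b' Hbb'.
  have [f Hf] := choice _ Hbb'; have [f' Hf'] := choice _ Hf.
  exists (@op _ _ (subalg HA) o f), (@op _ _ (subalg HA) o f'); split => /=.
  + by apply: compat => i; case: (Hf' i).
  + by apply: compat => i; case: (Hf' i).
  + by apply: pcompat => i; case: (Hf' i).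
Qed.

End Lift.

Section FullyEpic.
Variables (Op : Type) (ar : Op -> nat) (E : term ar -> term ar -> Prop).
Variables (B : algebra ar) (HB : in_variety E B).
Variables (A : B -> Prop) (HA : subuniverse A) (Hep : epic E A).
Variables (th1 th2 : B -> B -> Prop).
Hypotheses (H1 : congruence th1) (H2 : congruence th2).
Hypothesis th1_into_A : forall b, exists a, A a /\ th1 b a.
Hypothesis th2_into_A : forall b, exists a, A a /\ th2 b a.

Let psi := cjoin (C := subalg HA) (restr th1) (restr th2).

Let psi_congruence : congruence psi := cjoin_congruence _ _.

Let restr_th1_sub a a' : restr th1 a a' -> psi a a'.
Proof. exact: cjoinl. Qed.

Let restr_th2_sub a a' : restr th2 a a' -> psi a a'.
Proof. exact: cjoinr. Qed.

Let gam := lift_cong th1 psi.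

Let gam_congruence : congruence gam :=
  lift_cong_congruence H1 th1_into_A psi_congruence restr_th1_sub.

Let gam_restr a a' : gam (sval a) (sval a') <-> psi a a' :=
  lift_cong_restr H1 psi_congruence restr_th1_sub a a'.

Lemma th2_sub_lift_cong b b' : th2 b b' -> gam b b'.
Proof.
have [r Hr] : exists r : B -> {x : B | A x}, forall b, th2 b (sval (r b)).
  apply: (choice (fun b (a : {x : B | A x}) => th2 b (sval a))) => b0.
  by have [a [Ha Hb0a]] := th2_into_A b0; exists (exist _ a Ha).
case: H2 => _ sym trans compat.
have retract : forall b, gam b (sval (r b)).
  apply: (epic_congr_retract HB Hep gam_congruence).
  - move=> a Ha; apply/(gam_restr (exist _ a Ha) (r a)).
    by apply: restr_th2_sub; apply: Hr.
  - move=> o b0.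
    apply/(gam_restr _ (@op _ _ (subalg HA) o (fun i => r (b0 i)))).
    apply: restr_th2_sub; apply: (trans _ _ _ (sym _ _ (Hr _))).
    by apply: compat => i; apply: Hr.
move=> Hbb'; case: gam_congruence => _ gsym gtrans _.
apply: (gtrans _ _ _ (retract b)).
apply: (gtrans _ _ _ _ (gsym _ _ (retract b'))).
apply/gam_restr; apply: restr_th2_sub.
exact: trans (sym _ _ (Hr b)) (trans _ _ _ Hbb' (Hr b')).
Qed.

Lemma restr_cjoin_sub_cjoin_restr x y :
  restr (cjoin th1 th2) x y -> psi x y.
Proof.
move=> Hxy; apply/gam_restr.
apply: Hxy gam_congruence _ th2_sub_lift_cong.
exact: (lift_cong_ge H1 th1_into_A psi_congruence).
Qed.

End FullyEpic.

Theorem mainTheorem15 (Op : Type) (ar : Op -> nat)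
  (E : term ar -> term ar -> Prop) (B : algebra ar) (HB : in_variety E B)
  (A : B -> Prop) (HA : subuniverse A) (Hfe : fully_epic E A)
  (th1 th2 : B -> B -> Prop) (H1 : congruence th1) (H2 : congruence th2) :
  forall x y : {b : B | A b},
    @restr _ _ B A (cjoin th1 th2) x y <->
    @cjoin _ _ (subalg HA) (@restr _ _ B A th1) (@restr _ _ B A th2) x y.
Proof.
move=> x y; split; last exact: cjoin_restr_sub_restr_cjoin.
have [[_ _ into_A] Hep] := Hfe.
have [id1|nid1] := classic (forall u v, th1 u v <-> u = v).
  by move=> /(cjoin_idl_sub (fun u v => proj1 (id1 u v)) H2); apply: cjoinr.
have [id2|nid2] := classic (forall u v, th2 u v <-> u = v).
  by move=> /(cjoin_idr_sub (fun u v => proj1 (id2 u v)) H1); apply: cjoinl.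
exact: (restr_cjoin_sub_cjoin_restr HB Hep H1 H2
          (into_A _ H1 nid1) (into_A _ H2 nid2)).
Qed.
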